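(* Let $p\in(0,1)$ and $N=1/(1-p)$. For integers $s\ge0$ and $r\ge0$, $$F_s(r)\le p^{r/2}\,N^s\,4^s .$$
   Context: For $L\in\mathbb N$ and $j\in\mathbb Z$ define the chain functions $F_0(j)=p^{|j|}$ and, for $L\ge1$, $$F_L(j)=\sum_{j_1,\dots,j_L\in\mathbb Z}p^{|j-j_1|+|j_1-j_2|+\cdots+|j_{L-1}-j_L|+|j_L|}.$$ *)

From HB Require Import structures.
From mathcomp Require Import all_boot all_order all_algebra.
From mathcomp Require Import all_classical all_reals all_analysis.
Set Implicit Arguments. Unset Strict Implicit. Unset Printing Implicit Defensive.
Import Order.TTheory GRing.Theory Num.Theory.
Local Open Scope classical_set_scope.
Local Open Scope ring_scope.

(* exponent |j - j1| + |j1 - j2| + ... + |j_{L-1} - j_L| + |j_L|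
   for the chain j, j1, ..., jL, 0 ; for L = 0 (s = [::]) this is |j|. *)
Definition chain_exp (j : int) (s : seq int) : nat :=
  sumn (pairmap (fun a b : int => `|a - b|%N) j (rcons s 0)).

(* F_L(j) = sum over (j1,...,jL) in Z^L of p^{chain_exp}, as an
   extended-real sum of nonnegative terms (possibly +oo a priori). *)
Definition F (R : realType) (p : R) (L : nat) (j : int) : \bar R :=
  (\esum_(t in [set: L.-tuple int]) ((p ^+ chain_exp j (tval t))%:E))%R.

(* Write p = q^2.  A chain from r to 0 has exponent e >= r, so
   p^e <= q^r q^e, and it remains to bound sums of q^e over chains of length s.
   Peeling off the first step j -> j1 contributes a factor
   sum_j1 q^|j - j1| <= 2/(1-q), whence the bound (2/(1-q))^s, and
   2/(1-q) <= 4/(1-p) because 1 - p = (1-q)(1+q) <= 2(1-q).  The extended-real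
   sum F is the supremum of its finite partial sums, to which all of this applies. *)

From HB Require Import structures.
From mathcomp Require Import all_boot all_order all_algebra.
From mathcomp Require Import all_classical all_reals all_analysis.
From mathcomp Require Import ring lra zify.
Import Order.TTheory GRing.Theory Num.Theory.
Local Open Scope ring_scope.

Lemma chain_exp_nil (j : int) : chain_exp j [::] = `|j|%N.
Proof. by rewrite /chain_exp /= subr0 addn0. Qed.

Lemma chain_exp_cons (j h : int) (s : seq int) :
  chain_exp j (h :: s) = (`|j - h|%N + chain_exp h s)%N.
Proof. by []. Qed.

Lemma norm_le_chain_exp (j : int) (s : seq int) : (`|j|%N <= chain_exp j s)%N.
Proof.
elim: s j => [|h s IH] j; first by rewrite chain_exp_nil.
rewrite chain_exp_cons; have := leqD_dist j h 0; rewrite !subr0 => /leq_trans.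
by apply; rewrite leq_add2l.
Qed.

Lemma partition_big_undup [R : Type] [idx : R] (op : Monoid.com_law idx)
    [I J : eqType] (s : seq I) (f : I -> J) (F : I -> R) :
  \big[op/idx]_(i <- s) F i =
  \big[op/idx]_(j <- undup (map f s)) \big[op/idx]_(i <- s | j == f i) F i.
Proof.
rewrite [RHS](exchange_big_dep xpredT) //= big_seq [RHS]big_seq.
apply: eq_bigr => i si; rewrite -big_filter filter_pred1_uniq ?undup_uniq //.
  by rewrite big_seq1.
by rewrite mem_undup map_f.
Qed.

Lemma ler_sum_uniq_sub {R : numDomainType} {I : eqType} [s s' : seq I]
    (F : I -> R) :
  uniq s -> uniq s' -> {subset s <= s'} -> (forall i, 0 <= F i) ->
  \sum_(i <- s) F i <= \sum_(i <- s') F i.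
Proof.
move=> us us' ss' F_ge0.
have pe : perm_eq s [seq i <- s' | i \in s].
  apply: uniq_perm => //; first by rewrite filter_uniq.
  by move=> i; rewrite mem_filter; case si: (i \in s) => //=; rewrite ss'.
rewrite (perm_big _ pe) big_filter [X in _ <= X](bigID (mem s)) /= lerDl.
exact: sumr_ge0.
Qed.

Section ChainSums.
Context {R : realFieldType} {q : R}.
Hypotheses (q_ge0 : 0 <= q) (q_lt1 : q < 1).

Lemma sum_expr_uniq_le (S : seq nat) :
  uniq S -> \sum_(n <- S) q ^+ n <= (1 - q)^-1.
Proof.
move=> uS; pose m := (\max_(n <- S) n).+1.
have Sm : {subset S <= index_iota 0 m}.
  by move=> n nS; rewrite mem_index_iota ltnS leq_bigmax_seq.
have := ler_sum_uniq_sub (fun n => q ^+ n) uS (iota_uniq _ _) Sm.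
move=> /(_ (fun n => exprn_ge0 n q_ge0)) /le_trans; apply.
have geo : (1 - q) * \sum_(i < m) q ^+ i = 1 - q ^+ m.
  rewrite -[in RHS](expr1n R m) subrXX; congr (_ * _).
  by apply: eq_bigr => i _; rewrite expr1n mul1r.
rewrite -/(index_iota 0 m) big_mkord -[(1 - q)^-1]mulr1 ler_pdivlMl ?subr_gt0 // geo.
rewrite lerBlDr lerDl.
exact: exprn_ge0.
Qed.

Lemma sum_expr_dist_uniq_le (j : int) (H : seq int) :
  uniq H -> \sum_(h <- H) q ^+ `|j - h|%N <= 2 * (1 - q)^-1.
Proof.
move=> uH; rewrite (bigID (fun h => j <= h)) /= mulr2n mulrDl mul1r.
have half_le (P : pred int) :
    (forall h h', P h -> P h' -> (j <= h) = (j <= h')) ->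
    \sum_(h <- H | P h) q ^+ `|j - h|%N <= (1 - q)^-1.
  move=> Psign; rewrite -big_filter -(big_map (fun h => `|j - h|%N) xpredT).
  apply: sum_expr_uniq_le; rewrite map_inj_in_uniq ?filter_uniq //.
  move=> h h'; rewrite !mem_filter => /andP[Ph _] /andP[Ph' _].
  have := Psign _ _ Ph Ph'; lia.
by apply: lerD; apply: half_le => h h' /=;
  [move=> -> -> | move=> /negbTE -> /negbTE ->].
Qed.

Lemma sum_chain_exp_le (s : nat) (j : int) (A : seq (seq int)) :
  uniq A -> all (fun t => size t == s) A ->
  \sum_(t <- A) q ^+ chain_exp j t <= (2 * (1 - q)^-1) ^+ s.
Proof.
have C_ge0 : 0 <= 2 * (1 - q)^-1 by rewrite mulr_ge0 // invr_ge0 subr_ge0 ltW.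
elim: s j A => [|s IH] j A uA /allP sA.
  have A_nil : {subset A <= [:: [::]]}.
    by move=> t /sA /eqP/size0nil ->; rewrite mem_seq1.
  have := ler_sum_uniq_sub (fun t => q ^+ chain_exp j t) uA
    (erefl : uniq [:: [::]]) A_nil.
  move=> /(_ (fun t => exprn_ge0 _ q_ge0)) /le_trans; apply.
  by rewrite big_seq1 chain_exp_nil expr0 exprn_ile1 // ltW.
set H := undup [seq head 0 t | t <- A].
rewrite (partition_big_undup _ _ (head 0)) -/H exprS.
apply: (@le_trans _ _ ((\sum_(h <- H) q ^+ `|j - h|%N) * (2 * (1 - q)^-1) ^+ s)).
  2: by rewrite ler_wpM2r ?exprn_ge0 // sum_expr_dist_uniq_le ?undup_uniq.
rewrite mulr_suml big_seq [X in _ <= X]big_seq; apply: ler_sum => h _.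
pose B := [seq behead t | t <- A & h == head 0 t].
have -> : \sum_(t <- A | h == head 0 t) q ^+ chain_exp j t =
    q ^+ `|j - h|%N * \sum_(u <- B) q ^+ chain_exp h u.
  rewrite big_map big_filter mulr_sumr big_seq_cond [RHS]big_seq_cond.
  apply: eq_bigr => t /andP[/sA]; case: t => [|a u] //= _ /eqP ->.
  by rewrite chain_exp_cons exprD.
rewrite ler_wpM2l ?exprn_ge0 //; apply: IH.
  rewrite map_inj_in_uniq ?filter_uniq // => t t'.
  rewrite !mem_filter => /andP[/eqP ht /sA st] /andP[/eqP ht' /sA st'].
  by case: t t' st st' ht ht' => [|a u] [|a' u'] //= _ _ <- <- ->.
apply/allP => u /mapP [t]; rewrite mem_filter => /andP[_ /sA /eqP st] ->.
by rewrite size_behead st.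
Qed.

Lemma sqr_expr_chain_exp_le (j : int) (t : seq int) :
  (q ^+ 2) ^+ chain_exp j t <= q ^+ `|j|%N * q ^+ chain_exp j t.
Proof.
rewrite -exprM mulnC exprM expr2 ler_wpM2r ?exprn_ge0 //.
by rewrite ler_wiXn2l ?norm_le_chain_exp ?(ltW q_lt1).
Qed.

Lemma two_div_1B_le_div_1Bsqr : 2 * (1 - q)^-1 <= (1 - q ^+ 2)^-1 * 4.
Proof.
have q2_lt1 : q ^+ 2 < 1 by rewrite expr_lt1.
rewrite -subr_ge0.
have -> : (1 - q ^+ 2)^-1 * 4 - 2 * (1 - q)^-1 = 2 / (1 - q ^+ 2) * (1 - q).
  by field; rewrite !subr_eq0 !gt_eqF.
by rewrite mulr_ge0 ?divr_ge0 // subr_ge0 ltW.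
Qed.

End ChainSums.

Lemma F_le_of_finsum_le (R : realType) (p : R) (s : nat) (j : int) (B : R) :
  (forall A : seq (seq int), uniq A -> all (fun t => size t == s) A ->
     \sum_(t <- A) p ^+ chain_exp j t <= B) ->
  (F p s j <= B%:E)%E.
Proof.
move=> finsum_le; rewrite /F /esum; apply: ge_ereal_sup => _ [X [finX _] <-].
rewrite fsbig_finite //= -(big_map val xpredT (fun u => (p ^+ chain_exp j u)%:E)).
rewrite sumEFin lee_fin; apply: finsum_le.
  by rewrite map_inj_uniq ?finmap.fset_uniq //; exact: val_inj.
by apply/allP => u /mapP [t _ ->]; rewrite size_tuple.
Qed.

Theorem lemma9 (R : realType) (p : R) (hp0 : 0 < p) (hp1 : p < 1)
  (s r : nat) :
  (F p s r%:Z <= (p `^ (r%:R / 2) * (1 / (1 - p)) ^+ s * 4 ^+ s)%:E)%E.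
Proof.
set q := Num.sqrt p.
have q_ge0 : 0 <= q by exact: sqrtr_ge0.
have qp : q ^+ 2 = p by rewrite sqr_sqrtr // ltW.
have q_lt1 : q < 1 by nra.
have pr : p `^ (r%:R / 2) = q ^+ r.
  by rewrite mulrC powRrM powR12_sqrt ?ltW // powR_mulrn.
apply: F_le_of_finsum_le => A uA sA.
apply: (@le_trans _ _ (\sum_(t <- A) q ^+ r * q ^+ chain_exp r t)).
  by apply: ler_sum => t _; rewrite -qp (sqr_expr_chain_exp_le q_ge0 q_lt1).
rewrite -mulr_sumr pr -mulrA -exprMn ler_wpM2l ?exprn_ge0 //.
apply: le_trans (sum_chain_exp_le q_ge0 q_lt1 _ r _ uA sA) _.
rewrite lerXn2r ?nnegrE ?mulr_ge0 ?divr_ge0 ?invr_ge0 //; try lra.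
by rewrite div1r -qp two_div_1B_le_div_1Bsqr.
Qed.
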